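(* Let $g\in\mathbb{Q}\setminus\{-1,0,1\}$ and $m=p_1^{e_1}\cdots p_r^{e_r}$. The set of integers $u\in S(g)$ with $\gcd(u,m)=1$ and $p_j^{e_j}\nmid\mathrm{ord}_g(u)$ for $1\le j\le r$ is completely multiplicative, i.e. for all natural numbers $x,y$: $xy$ lies in the set if and only if both $x$ and $y$ do.
   Context: $S(g)$ is the set of natural numbers all of whose prime factors $p$ satisfy $\nu_p(g)=0$; for $u\in S(g)$, $\mathrm{ord}_g(u)$ is the multiplicative order of $g$ modulo $u$. *)

From mathcomp Require Import all_boot all_order all_algebra.
From Stdlib Require Import ClassicalDescription.
Set Implicit Arguments. Unset Strict Implicit. Unset Printing Implicit Defensive.
Import Order.TTheory GRing.Theory Num.Theory.
Local Open Scope ring_scope.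

Definition nu_p_zero (g : rat) (p : nat) : bool :=
  ~~ (p %| `|numq g|)%N && ~~ (p %| `|denq g|)%N.

Definition inS (g : rat) (u : nat) : bool :=
  (0 < u)%N && all (nu_p_zero g) (primes u).

(* g^k = 1 mod u, i.e. u | numq(g)^k - denq(g)^k (denq g is invertible mod u
   when u is in S(g)). *)
Definition pow_is_one_mod (g : rat) (u k : nat) : bool :=
  ((u%:Z) %| (numq g) ^+ k - (denq g) ^+ k)%Z.

Definition ord_pred (g : rat) (u : nat) : pred nat :=
  fun k => (0 < k)%N && pow_is_one_mod g u k.

(* ord_g(u): the multiplicative order of g modulo u (least k >= 1 with
   g^k = 1 mod u); junk value 0 if no such k exists (never for u in S(g)). *)
Definition ordg (g : rat) (u : nat) : nat :=
  match excluded_middle_informative (exists k, ord_pred g u k) with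
  | left h => ex_minn h
  | right _ => 0%N
  end.

(* The set of u in S(g) with gcd(u,m)=1 and p^(nu_p(m)) not dividing ord_g(u)
   for every prime p | m (i.e. p_j^{e_j} for m = p_1^{e_1}...p_r^{e_r}). *)
Definition inA (g : rat) (m u : nat) : bool :=
  [&& inS g u, coprime u m &
      all (fun p => ~~ (p ^ logn p m %| ordg g u)%N) (primes m)].

From Pilot Require Import Defs.
From mathcomp Require Import all_boot all_algebra.
From mathcomp Require Import cyclic.
From Stdlib Require Import ClassicalDescription.
Set Implicit Arguments. Unset Strict Implicit. Unset Printing Implicit Defensive.
Import GRing.Theory Num.Theory.
Local Open Scope ring_scope.

(* For u in S(g) both numerator and denominator of g are units modulo u, so
   g^k = 1 (mod u) iff ord_g(u) | k; in particular ord_g(x) and ord_g(y) divide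
   ord_g(xy). Conversely, with L = lcm(ord_g(x), ord_g(y)) we get g^L = 1 modulo
   lcm(x, y), and since a = b (mod d) implies a^d = b^d (mod d(a - b)), also
   g^(L gcd(x, y)) = 1 modulo lcm(x, y) gcd(x, y) = xy. As gcd(x, y) is prime to
   m, a prime power p^e with p | m divides ord_g(xy) iff it divides
   lcm(ord_g(x), ord_g(y)), i.e. iff it divides ord_g(x) or ord_g(y). *)

Section PowerDifferences.

Variables (a b d : int).

Lemma dvdz_subXXD i j : (d %| a ^+ i - b ^+ i)%Z -> (d %| a ^+ j - b ^+ j)%Z ->
  (d %| a ^+ (i + j) - b ^+ (i + j))%Z.
Proof.
move=> di dj.
have -> : a ^+ (i + j) - b ^+ (i + j) =
    a ^+ i * (a ^+ j - b ^+ j) + (a ^+ i - b ^+ i) * b ^+ j.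
  by rewrite !exprD mulrBr mulrBl addrA subrK.
exact: rpredD (dvdz_mull _ dj) (dvdz_mulr _ di).
Qed.

Lemma dvdz_subXXM i c :
  (d %| a ^+ i - b ^+ i)%Z -> (d %| a ^+ (i * c) - b ^+ (i * c))%Z.
Proof. by move=> di; rewrite !exprM subrXX dvdz_mulr. Qed.

Lemma dvdz_subXXDl i j : coprimez d b ->
  (d %| a ^+ (i + j) - b ^+ (i + j))%Z -> (d %| a ^+ j - b ^+ j)%Z ->
  (d %| a ^+ i - b ^+ i)%Z.
Proof.
move=> cdb dij dj.
have : (d %| (a ^+ i - b ^+ i) * b ^+ j)%Z.
  have -> : (a ^+ i - b ^+ i) * b ^+ j =
      (a ^+ (i + j) - b ^+ (i + j)) - a ^+ i * (a ^+ j - b ^+ j).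
    by rewrite !exprD mulrBl mulrBr opprB [RHS]addrC addrA subrK.
  exact: rpredB dij (dvdz_mull _ dj).
by rewrite Gauss_dvdzl // coprimezXr.
Qed.

End PowerDifferences.

(* Write [a^k - b^k = (a - b) * sum_i a^(k-1-i) b^i]: each summand is
   [b^(k-1)] modulo [a - b], hence modulo [k], so the sum is [0] modulo [k]. *)
Lemma dvdz_subXX_lift (a b : int) (k : nat) :
  (k%:Z %| a - b)%Z -> (k%:Z * (a - b) %| a ^+ k - b ^+ k)%Z.
Proof.
move=> k_ab; rewrite subrXX mulrC dvdz_mul //.
have -> : \sum_(i < k) a ^+ (k.-1 - i) * b ^+ i =
    \sum_(i < k) (a ^+ (k.-1 - i) - b ^+ (k.-1 - i)) * b ^+ i
    + \sum_(i < k) b ^+ k.-1.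
  rewrite -big_split /=; apply: eq_bigr => i _.
  rewrite mulrBl -exprD subnK ?subrK //.
  by rewrite -ltnS prednK ?(leq_ltn_trans _ (ltn_ord i)).
apply: rpredD.
  apply: rpred_sum => i _; apply: dvdz_mulr; apply: dvdz_trans k_ab _.
  by rewrite subrXX dvdz_mulr.
by rewrite sumr_const card_ord -mulr_natr dvdz_mull // pmulrn intz.
Qed.

Lemma eqz_mod_expX_totient (c : int) (u : nat) :
  coprime u `|c| -> (c ^+ (totient u * 2)%N = 1 %[mod u])%Z.
Proof.
move=> cu.
(* Squaring makes the base nonnegative, so that Euler's theorem on nat applies. *)
have -> : c ^+ (totient u * 2)%N = ((`|c| ^ 2) ^ totient u)%N%:Z.
  by rewrite mulnC exprM -real_normK ?num_real // -abszE -!natz !natrX.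
rewrite -[1]/(1%N%:Z) !modz_nat Euler_exp_totient //.
by rewrite coprimeXl // coprime_sym.
Qed.

Lemma coprime_primes (u n : nat) :
  (0 < u)%N -> {in primes u, forall p, ~~ (p %| n)%N} -> coprime u n.
Proof.
move=> u_gt0 hu; apply: contraT => gcd_neq1.
have gcd_gt1 : (1 < gcdn u n)%N.
  by rewrite ltn_neqAle eq_sym gcd_neq1 gcdn_gt0 u_gt0.
have pdiv_gcd := pdiv_dvd (gcdn u n).
have pdiv_u : pdiv (gcdn u n) \in primes u.
  by rewrite mem_primes pdiv_prime // u_gt0 (dvdn_trans pdiv_gcd (dvdn_gcdl _ _)).
by have := hu _ pdiv_u; rewrite (dvdn_trans pdiv_gcd (dvdn_gcdr _ _)).
Qed.

Lemma inS_gt0 g u : inS g u -> (0 < u)%N.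
Proof. by case/andP. Qed.

Lemma inS_coprime g u : inS g u -> coprime u `|numq g| && coprime u `|denq g|.
Proof.
case/andP=> u_gt0 /allP hu.
by rewrite !coprime_primes // => p /hu /andP[].
Qed.

Lemma inS_mul g x y :
  (0 < x)%N -> (0 < y)%N -> inS g (x * y) = inS g x && inS g y.
Proof.
move=> x_gt0 y_gt0; rewrite /inS muln_gt0 x_gt0 y_gt0 /=.
apply/allP/andP => [h|[/allP hx /allP hy] p].
  by split; apply/allP => p pp; apply: h; rewrite primesM // pp ?orbT.
by rewrite primesM // => /orP[]; [apply: hx | apply: hy].
Qed.

Section MultiplicativeOrder.

Variables (g : rat) (u : nat).
Hypothesis Su : inS g u.

Lemma ord_pred_exists : exists k, Defs.ord_pred g u k.
Proof.
have /andP[cn cd] := inS_coprime Su.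
exists (totient u * 2)%N; rewrite /Defs.ord_pred /pow_is_one_mod.
rewrite muln_gt0 totient_gt0 (inS_gt0 Su) -eqz_mod_dvd /=.
by rewrite (eqz_mod_expX_totient cn) (eqz_mod_expX_totient cd).
Qed.

Lemma ordg_gt0 : (0 < ordg g u)%N.
Proof.
rewrite /ordg; case: excluded_middle_informative => [h|[]].
  by case: ex_minnP => o /andP[].
exact: ord_pred_exists.
Qed.

Lemma pow_is_one_mod_ordg : pow_is_one_mod g u (ordg g u).
Proof.
rewrite /ordg; case: excluded_middle_informative => [h|[]].
  by case: ex_minnP => o /andP[].
exact: ord_pred_exists.
Qed.

Lemma ordg_min k : (0 < k)%N -> pow_is_one_mod g u k -> (ordg g u <= k)%N.
Proof.
move=> k_gt0 gk; rewrite /ordg; case: excluded_middle_informative => [h|[]].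
  by case: ex_minnP => o _; apply; rewrite /Defs.ord_pred k_gt0.
exact: ord_pred_exists.
Qed.

Lemma pow_is_one_modE k : pow_is_one_mod g u k = (ordg g u %| k)%N.
Proof.
have /andP[_ cd] := inS_coprime Su.
apply/idP/idP => [gk|/dvdnP[c ->]]; last first.
  by rewrite mulnC; apply: dvdz_subXXM; apply: pow_is_one_mod_ordg.
rewrite /dvdn; apply: contraT; rewrite -lt0n => r_gt0.
have gr : pow_is_one_mod g u (k %% ordg g u)%N.
  apply: (@dvdz_subXXDl _ _ _ _ (k %/ ordg g u * ordg g u)%N).
  - by rewrite coprimezE.
  - by rewrite addnC -divn_eq.
  - by rewrite mulnC; apply: dvdz_subXXM; apply: pow_is_one_mod_ordg.
by have := ordg_min r_gt0 gr; rewrite leqNgt ltn_pmod // ordg_gt0.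
Qed.

End MultiplicativeOrder.

Lemma ordg_dvd g u v :
  inS g u -> inS g v -> (u %| v)%N -> (ordg g u %| ordg g v)%N.
Proof.
move=> Su Sv uv; rewrite -(pow_is_one_modE Su).
by apply: dvdz_trans (pow_is_one_mod_ordg Sv); rewrite dvdzE.
Qed.

Lemma ordgM_dvd g x y : inS g x -> inS g y ->
  (ordg g (x * y) %| lcmn (ordg g x) (ordg g y) * gcdn x y)%N.
Proof.
move=> Sx Sy; have [x_gt0 y_gt0] := (inS_gt0 Sx, inS_gt0 Sy).
have Sxy : inS g (x * y) by rewrite inS_mul // Sx Sy.
set L := lcmn _ _.
have gL : ((lcmn x y)%:Z %| numq g ^+ L - denq g ^+ L)%Z.
  rewrite dvdz_lcm -!/(pow_is_one_mod g _ L) !pow_is_one_modE //.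
  by rewrite dvdn_lcml dvdn_lcmr.
have gD : ((gcdn x y)%:Z %| numq g ^+ L - denq g ^+ L)%Z.
  apply: dvdz_trans gL; rewrite dvdzE /=.
  exact: dvdn_trans (dvdn_gcdl x y) (dvdn_lcml x y).
rewrite -(pow_is_one_modE Sxy) /pow_is_one_mod !exprM -muln_lcm_gcd PoszM mulrC.
apply: dvdz_trans (dvdz_subXX_lift gD); rewrite dvdz_mul2l //.
by rewrite -lt0n gcdn_gt0 x_gt0.
Qed.

Lemma pfactor_dvd_lcm p e a b : prime p -> (0 < a)%N -> (0 < b)%N ->
  (p ^ e %| lcmn a b)%N = (p ^ e %| a)%N || (p ^ e %| b)%N.
Proof.
move=> p_pr a_gt0 b_gt0.
by rewrite !pfactor_dvdn ?lcmn_gt0 ?a_gt0 // logn_lcm // leq_max.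
Qed.

Lemma pfactor_dvd_ordgM g x y p e :
  inS g x -> inS g y -> prime p -> coprime p x ->
  (p ^ e %| ordg g (x * y))%N = (p ^ e %| ordg g x)%N || (p ^ e %| ordg g y)%N.
Proof.
move=> Sx Sy p_pr cpx; have [x_gt0 y_gt0] := (inS_gt0 Sx, inS_gt0 Sy).
have Sxy : inS g (x * y) by rewrite inS_mul // Sx Sy.
apply/idP/idP => [hp | /orP[] hp].
- rewrite -pfactor_dvd_lcm ?ordg_gt0 // -(@Gauss_dvdl _ _ (gcdn x y)).
    exact: dvdn_trans hp (ordgM_dvd Sx Sy).
  by rewrite coprimeXl // (coprime_dvdr (dvdn_gcdl x y)).
- exact: dvdn_trans hp (ordg_dvd Sx Sxy (dvdn_mulr _ _)).
- exact: dvdn_trans hp (ordg_dvd Sy Sxy (dvdn_mull _ _)).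
Qed.

Theorem lemma5 (g : rat) (m : nat) :
  g != 0 -> g != 1 -> g != -1 -> (0 < m)%N ->
  forall x y : nat, (0 < x)%N -> (0 < y)%N ->
    inA g m (x * y) = inA g m x && inA g m y.
Proof.
move=> _ _ _ _ x y x_gt0 y_gt0.
rewrite /inA inS_mul // coprimeMl.
case Sx: (inS g x); case Sy: (inS g y); rewrite ?andbF //=.
case cx: (coprime x m); case cy: (coprime y m); rewrite ?andbF //=.
rewrite -all_predI; apply: eq_in_all => p.
rewrite mem_primes => /and3P[p_pr _ p_m] /=.
by rewrite pfactor_dvd_ordgM // ?negb_or // (coprime_dvdl p_m) // coprime_sym.
Qed.
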